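(* (a) If $l$ is a positive multiple of $4$, then there exists a self-dual $A$-code of length $l$. (b) There exist self-dual $A$-codes of every length $l\ge1$ if and only if $f$ is a square in $\mathbb{F}[x]$. (c) Let $f=f_1^{e_1}\cdots f_t^{e_t}$ be the prime factorization of $f$ in $\mathbb{F}[x]$ and $d_i=\deg f_i$. Then the following are equivalent: (1) there exist self-dual $A$-codes of every even length; (2) $f=g^2f'$ for some $g,f'\in\mathbb{F}[x]$ such that $-1$ is a square in $\mathbb{F}[x]/\langle f'(x)\rangle$; (3) either $|\mathbb{F}|\equiv 3\pmod 4$ and $d_ie_i$ is even for every $1\le i\le t$, or $|\mathbb{F}|$ is even, or $|\mathbb{F}|\equiv1\pmod 4$.
   Context: Let $\mathbb{F}$ be a finite field, $f(x)\in\mathbb{F}[x]$ monic of degree $m$, $A=\mathbb{F}[x]/\langle f(x)\rangle$. An $A$-code of length $l$ is an $A$-submodule of $A^l$; its dual is $C^\perp=\{a\in A^l:\sum_ia_ic_i=0\ \forall c\in C\}$, and $C$ is self-dual if $C=C^\perp$. *)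

From HB Require Import structures.
From mathcomp Require Import all_boot all_order all_algebra.
Set Implicit Arguments. Unset Strict Implicit. Unset Printing Implicit Defensive.
Import GRing.Theory.
Local Open Scope ring_scope.

(* A-codes over a commutative ring A (used with A = F[x]/<f>, i.e. the
   mathcomp quotient ring {poly %/ f}). *)
Section Codes.
Variable A : comNzRingType.
Variable l : nat.

Definition code := 'rV[A]_l -> Prop.

Definition is_Acode (C : code) : Prop :=
  [/\ C 0,
      (forall u v, C u -> C v -> C (u + v)) &
      (forall (a : A) u, C u -> C (a *: u))].

Definition code_form (a c : 'rV[A]_l) : A := \sum_(i < l) a 0 i * c 0 i.

Definition dual_code (C : code) : code :=
  fun a => forall c, C c -> code_form a c = 0.

Definition self_dual (C : code) : Prop :=
  forall a, C a <-> dual_code C a.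

Definition exists_self_dual_code : Prop :=
  exists C : code, is_Acode C /\ self_dual C.
End Codes.

(* Over every finite field -1 = a^2 + b^2, and then M = [[a, -b], [b, a]] satisfies
   M M^T = -1, so the graph {(u, uM)} of M is a self-dual code of length 4; direct sums
   give all multiples of 4.
   A self-dual code of length 1 lifts to an ideal (g) of F[x] with g | f; self-orthogonality
   gives f | g^2, and f/g is orthogonal to the code, hence in it, hence divisible by g,
   which forces f = g^2.  Conversely gA is self-dual when f = g^2.
   If f = g^2 f' and h^2 = -1 mod f', the pairs (c0, c1) with g | c0 and
   c1 = h c0 mod g f' form a self-dual code of length 2.  Conversely, if an irreducible
   p with -1 not a square mod p divides f exactly p^(2k+1) times, f | c0^2 + c1^2 forces
   p^(k+1) | c0 for every codeword, and then (f / p^(k+1), 0) is orthogonal to the code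
   without belonging to it.  Whether -1 is a square mod p depends only on
   #|F[x]/p| = q^(deg p) mod 4, and the Chinese remainder theorem glues square roots of
   -1 modulo the factors of odd multiplicity. *)

From HB Require Import structures.
From mathcomp Require Import all_boot all_order all_algebra all_field ring zify.
From Stdlib Require Import Classical.
Set Implicit Arguments. Unset Strict Implicit. Unset Printing Implicit Defensive.
Import GRing.Theory.
Local Open Scope ring_scope.

Section SelfDualCodes.
Variable A : comNzRingType.

Lemma code_formE l (a c : 'rV[A]_l) : code_form a c = (a *m c^T) 0 0.
Proof. by rewrite mxE; apply: eq_bigr => i _; rewrite mxE. Qed.

Lemma code_form0r l (a : 'rV[A]_l) : code_form a 0 = 0.
Proof. by rewrite code_formE trmx0 mulmx0 mxE. Qed.

Lemma code_form0l l (c : 'rV[A]_l) : code_form 0 c = 0.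
Proof. by rewrite code_formE mul0mx mxE. Qed.

Lemma code_formDl l (a b c : 'rV[A]_l) :
  code_form (a + b) c = code_form a c + code_form b c.
Proof. by rewrite !code_formE mulmxDl mxE. Qed.

Lemma code_form_mulmxr l (a c : 'rV[A]_l) (M : 'M_l) :
  code_form a (c *m M) = code_form (a *m M^T) c.
Proof. by rewrite !code_formE trmx_mul mulmxA. Qed.

Lemma code_form_delta l (a : 'rV[A]_l) j : code_form a 'e_j = a 0 j.
Proof. by rewrite code_formE trmx_delta -colE mxE. Qed.

Lemma code_form_row_mx m n (a1 c1 : 'rV[A]_m) (a2 c2 : 'rV[A]_n) :
  code_form (row_mx a1 a2) (row_mx c1 c2) = code_form a1 c1 + code_form a2 c2.
Proof. by rewrite !code_formE tr_row_mx mul_row_col mxE. Qed.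

Lemma exists_self_dual_codeD m n :
  exists_self_dual_code A m -> exists_self_dual_code A n ->
  exists_self_dual_code A (m + n).
Proof.
move=> [C1 [[C10 C1D C1Z] sd1]] [C2 [[C20 C2D C2Z] sd2]].
exists (fun c => C1 (lsubmx c) /\ C2 (rsubmx c)); split.
  split; first by rewrite !linear0.
    by move=> u v [? ?] [? ?]; rewrite !linearD; split; [apply: C1D | apply: C2D].
  by move=> k u [? ?]; rewrite !linearZ; split; [apply: C1Z | apply: C2Z].
move=> a; rewrite -[a]hsubmxK row_mxKl row_mxKr; split.
  move=> [/sd1 a1C /sd2 a2C] c [c1C c2C].
  by rewrite -[c]hsubmxK code_form_row_mx (a1C _ c1C) (a2C _ c2C) addr0.
move=> aCperp; split.
  apply/sd1 => c cC; have := aCperp (row_mx c 0).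
  rewrite code_form_row_mx code_form0r addr0; apply.
  by rewrite row_mxKl row_mxKr.
apply/sd2 => c cC; have := aCperp (row_mx 0 c).
rewrite code_form_row_mx code_form0r add0r; apply.
by rewrite row_mxKl row_mxKr.
Qed.

Lemma exists_self_dual_code_dvdn m l : exists_self_dual_code A m ->
  (0 < l)%N -> (m %| l)%N -> exists_self_dual_code A l.
Proof.
move=> Cm l_gt0 /dvdnP [k lE]; rewrite {}lE in l_gt0 *.
case: k l_gt0 => [|k] // _.
elim: k => [|k IHk]; first by rewrite mul1n.
by rewrite mulSn addnC; apply: exists_self_dual_codeD.
Qed.

Lemma exists_self_dual_code_mx n (M : 'M[A]_n) : M *m M^T = - 1%:M ->
  exists_self_dual_code A (n + n).
Proof.
move=> MMt; have MtM : M^T *m M = - 1%:M.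
  by apply/eqP; rewrite -eqr_oppLR -mulNmx; apply/eqP/mulmx1C; rewrite mulmxN MMt opprK.
exists (fun c => rsubmx c = lsubmx c *m M); split.
  split; first by rewrite !linear0 mul0mx.
    by move=> u v uC vC; rewrite !linearD /= uC vC mulmxDl.
  by move=> k u uC; rewrite !linearZ /= uC scalemxAl.
move=> x; rewrite -[x]hsubmxK row_mxKl row_mxKr; set x1 := lsubmx x; split.
  move=> -> c cC; rewrite -[c]hsubmxK cC code_form_row_mx code_form_mulmxr.
  by rewrite -mulmxA MMt mulmxN mulmx1 -code_formDl addrN code_form0l.
move=> xCperp; have /eqP x1E : x1 + rsubmx x *m M^T = 0.
  apply/rowP => j; rewrite [LHS]mxE [RHS]mxE.
  have := xCperp (row_mx 'e_j ('e_j *m M)).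
  rewrite code_form_row_mx code_form_mulmxr !code_form_delta.
  by apply; rewrite row_mxKl row_mxKr.
by move: x1E; rewrite addr_eq0 => /eqP ->; rewrite mulNmx -mulmxA MtM mulmxN mulmx1 opprK.
Qed.

Lemma exists_self_dual_code4 (a b : A) : a ^+ 2 + b ^+ 2 = -1 ->
  exists_self_dual_code A 4.
Proof.
move=> ab; pose M : 'M[A]_2 := \matrix_(i, j) nth 0 (nth [::] [:: [:: a; - b]; [:: b; a]] i) j.
apply: (@exists_self_dual_code_mx 2 M); apply/matrixP => i j.
rewrite !mxE !big_ord_recl big_ord0 !mxE /=.
by case: i => [[|[|//]] ?]; case: j => [[|[|//]] ?] /=; rewrite ?oppr0 -?ab; ring.
Qed.
End SelfDualCodes.

Section FinFieldSquares.
Variable K : finFieldType.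

Lemma natr_card_finField : (#|K|%:R : K) = 0.
Proof.
have : \sum_(x : K) (x + 1) = \sum_(x : K) x + 0.
  by rewrite addr0 [RHS](reindex_inj (addIr 1)).
by rewrite big_split sumr_const => /addrI.
Qed.

Lemma oppr1_finField : ~~ odd #|K| -> (-1 : K) = 1.
Proof. by move=> evenK; rewrite -[LHS]expf_card -signr_odd (negbTE evenK). Qed.

Lemma two_neq0_finField : odd #|K| -> (2%:R : K) != 0.
Proof.
move=> oddK; apply/negP => two0; have char2 : (2 \in [pchar K])%N by rewrite inE.
by move: oddK; rewrite -[odd _]negbK -dvdn2 (dvdn_pcharf char2) natr_card_finField eqxx.
Qed.

Lemma sqrf_neqN1 (x : K) : (#|K| %% 4 = 3)%N -> x ^+ 2 != -1.
Proof.
move=> K3; apply/eqP => x2; have x_neq0 : x != 0.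
  by apply: contra_eq_neq x2 => ->; rewrite expr0n eq_sym oppr_eq0 oner_eq0.
have x_opp : x = - x.
  rewrite -[LHS]expf_card (divn_eq #|K| 4) K3 exprD mulnC exprM.
  by rewrite (exprM x 2 2) x2 sqrrN expr1n expr1n mul1r exprS x2 mulrN1.
have oddK : odd #|K| by move: K3; lia.
have : 2%:R * x == 0 by rewrite mulr_natl mulr2n {2}x_opp addrN.
by rewrite mulf_eq0 (negbTE x_neq0) orbF (negbTE (two_neq0_finField oddK)).
Qed.

Lemma sqrf_eqN1 : (#|K| %% 4 = 1)%N -> exists x : K, x ^+ 2 = -1.
Proof.
(* X^(2k) - 1 has fewer roots than the 4k units, and x^(2k) = -1 for a non-root x. *)
move=> K1; set k := (#|K| %/ 4)%N.
have cardK : #|K| = (4 * k + 1)%N by rewrite {1}(divn_eq #|K| 4) K1 mulnC.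
have k_gt0 : (0 < k)%N by have := finNzRing_gt1 K; rewrite cardK; lia.
pose P : {poly K} := 'X^(2 * k) - 1.
have sizeP : size P = (2 * k).+1 by rewrite size_Xn_sub_1 //; lia.
have [x /[!mem_enum] /= x_neq0 Px] : exists2 x, x \in enum (predC1 0) & ~~ root P x.
  apply/allPn/negP => rootsP.
  have := max_poly_roots _ rootsP (enum_uniq _).
  by rewrite -cardE cardC1 cardK sizeP -size_poly_eq0 sizeP; lia.
have x4k : x ^+ (2 * k) ^+ 2 = 1.
  apply: (mulfI x_neq0); rewrite mulr1 -exprM -exprS.
  by rewrite (_ : (2 * k * 2).+1 = #|K|) ?expf_card // cardK; lia.
have : (x ^+ (2 * k) - 1) * (x ^+ (2 * k) + 1) == 0 by rewrite -subr_sqr x4k expr1n subrr.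
rewrite mulf_eq0 subr_eq0 addr_eq0 => /orP [/eqP x2k1 | /eqP x2k].
  by move: Px; rewrite /root !hornerE x2k1 subrr eqxx.
by exists (x ^+ k); rewrite -exprM mulnC.
Qed.

Lemma sqrf_eqN1P : (exists x : K, x ^+ 2 = -1) <-> (#|K| %% 4 != 3)%N.
Proof.
split=> [[x x2] | K_n3]; first by apply/eqP => /(sqrf_neqN1 x); rewrite x2 eqxx.
have [oddK | evenK] := boolP (odd #|K|); last first.
  by exists 1; rewrite expr1n oppr1_finField.
by apply: sqrf_eqN1; move: K_n3 oddK; lia.
Qed.

Lemma card_finField_le_sqr : (#|K| <= 2 * #|[set x ^+ 2 | x : K]|)%N.
Proof.
rewrite -[X in (X <= _)%N]sum1_card (partition_big_imset (fun x : K => x ^+ 2)).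
rewrite mulnC -sum_nat_const.
apply: leq_sum => _ /imsetP [y _ ->]; rewrite sum1dep_card.
apply: leq_trans (_ : #|[set y; - y]| <= 2)%N; last by rewrite cards2; case: (_ != _).
by apply/subset_leq_card/subsetP => x; rewrite !inE eqf_sqr.
Qed.

Lemma sqrf_addN1 : exists a b : K, a ^+ 2 + b ^+ 2 = -1.
Proof.
have [oddK | evenK] := boolP (odd #|K|); last first.
  by exists 1, 0; rewrite expr1n expr0n addr0 oppr1_finField.
(* The squares S and the set -1 - S each fill more than half of K. *)
set S := [set x ^+ 2 | x : K]; pose T : {set K} := [set -1 - v | v in S].
have cardT : #|T| = #|S| by apply: card_imset; apply: can_inj (subKr (-1)).
have : (0 < #|S :&: T|)%N.
  rewrite -(ltn_add2l #|S :|: T|) addn0 cardsUI cardT addnn -mul2n.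
  apply: leq_ltn_trans (max_card _) _; rewrite ltn_neqAle card_finField_le_sqr andbT.
  by apply: contraTneq oddK => ->; rewrite mul2n odd_double.
case/card_gt0P => _ /setIP [/imsetP [a _ ->] /imsetP [_ /imsetP [b _ ->] ab]].
by exists a, b; rewrite ab subrK.
Qed.
End FinFieldSquares.

Lemma exists_self_dual_code4_finField (F : finFieldType) (A : comNzRingType)
  (phi : {rmorphism F -> A}) : exists_self_dual_code A 4.
Proof.
have [a [b ab]] := sqrf_addN1 F; apply: (exists_self_dual_code4 (a := phi a) (b := phi b)).
by rewrite -!rmorphXn -rmorphD ab rmorphN1.
Qed.


Section PolyDivisibility.
Variable F : fieldType.
Implicit Types p q a b : {poly F}.

Lemma irredp_dvdpM p a b : irreducible_poly p ->
  (p %| a * b) = (p %| a) || (p %| b).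
Proof.
move=> p_irr; have [pa | npa] /= := boolP (p %| a); first by rewrite dvdp_mulr.
by rewrite Gauss_dvdpr // irreducible_poly_coprime.
Qed.

Lemma coprimep_prod p (I : Type) (r : seq I) (P : pred I) (G : I -> {poly F}) :
  (forall i, P i -> coprimep p (G i)) -> coprimep p (\prod_(i <- r | P i) G i).
Proof.
move=> cop; apply: (big_ind (coprimep p)) => [|q1 q2 c1 c2|//]; first exact: coprimep1.
by rewrite coprimepMr c1 c2.
Qed.

Lemma coprimep_monic_irredp p q :
  p \is monic -> irreducible_poly p -> q \is monic -> irreducible_poly q ->
  p != q -> coprimep p q.
Proof.
move=> p_monic p_irr q_monic [_ q_irr] pq; rewrite irreducible_poly_coprime //.
apply: contra pq => /q_irr; rewrite -(eqp_monic p_monic q_monic); apply.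
by case: p_irr => /ltn_eqF; rewrite eq_sym => ->.
Qed.

Lemma dvdp_sqr_add1M m n a b : coprimep m n ->
  m %| a ^+ 2 + 1 -> n %| b ^+ 2 + 1 -> exists h, m * n %| h ^+ 2 + 1.
Proof.
move=> /[dup] mn /Bezout_eq1_coprimepP [[u v] /= uv] ma nb.
have vn : v * n = 1 - u * m by rewrite -uv; ring.
have um : u * m = 1 - v * n by rewrite -uv; ring.
pose h := a * (v * n) + b * (u * m); exists h.
have hm : h ^+ 2 + 1 = a ^+ 2 + 1 + m * (u * (b - a) * (h + a)).
  by rewrite /h vn; ring.
have hn : h ^+ 2 + 1 = b ^+ 2 + 1 + n * (v * (a - b) * (h + b)).
  by rewrite /h um; ring.
rewrite Gauss_dvdp // {1}hm hn.
by rewrite (dvdp_add ma (dvdp_mulIl _ _)) (dvdp_add nb (dvdp_mulIl _ _)).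
Qed.

Lemma dvdp_sqr_add1_prod (r : seq {poly F}) : pairwise (@coprimep F) r ->
  (forall p, p \in r -> exists h, p %| h ^+ 2 + 1) ->
  exists h, \prod_(p <- r) p %| h ^+ 2 + 1.
Proof.
elim: r => [|p r IHr]; first by exists 0; rewrite big_nil dvd1p.
rewrite pairwise_cons => /andP [cop_p /IHr {}IHr] sqrt_r.
have [h hr] := IHr (fun q qr => sqrt_r q (mem_behead (s := p :: r) qr)).
have [hp hpp] := sqrt_r p (mem_head _ _).
rewrite big_cons; apply: dvdp_sqr_add1M hpp hr.
by rewrite big_seq; apply: coprimep_prod; apply/allP.
Qed.

Lemma poly_ideal_monic_gen (I : {poly F} -> Prop) :
  (forall a b p q, I p -> I q -> I (a * p + b * q)) ->
  forall p, I p -> p != 0 ->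
  exists2 g, g \is monic & I g /\ forall q, I q -> g %| q.
Proof.
move=> Icomb p Ip p_neq0.
have [g [Ig g_neq0 gI]] : exists g, [/\ I g, g != 0 & forall q, I q -> g %| q].
  elim: {p}_.+1 {-2}p (ltnSn (size p)) Ip p_neq0 => // n IHn p sp Ip p_neq0.
  have [[q [Iq npq]] | gen_p] := classic (exists q, I q /\ ~~ (p %| q)).
    apply: (IHn (q %% p)); first by rewrite ltnS in sp; apply: leq_trans sp; rewrite ltn_modp.
      have -> : q %% p = 1 * q + (- (q %/ p)) * p by rewrite {2}(divp_eq q p); ring.
      exact: Icomb.
    by apply: contra npq => /eqP /modp_eq0P.
  exists p; split=> // q Iq; apply/negPn/negP => npq; apply: gen_p; by exists q.
have lc_neq0 : lead_coef g != 0 by rewrite lead_coef_eq0.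
exists ((lead_coef g)^-1 *: g).
  by rewrite monicE lead_coefZ mulVf.
split; first by rewrite -mul_polyC -[_ * g]addr0 -(mul0r g); apply: Icomb.
by move=> q /gI; rewrite (eqp_dvdl _ (eqp_scale _ (invr_neq0 lc_neq0))).
Qed.
End PolyDivisibility.

Section IrreducibleNoSqrtN1.
Variables (F : fieldType) (p : {poly F}).
Hypotheses (p_irr : irreducible_poly p) (p_nosqrt : forall h, ~~ (p %| h ^+ 2 + 1)).

Lemma irredp_dvdp_sqrD a b : p %| a ^+ 2 + b ^+ 2 -> (p %| a) && (p %| b).
Proof.
move=> p_ab; have [pb | npb] := boolP (p %| b).
  rewrite andbT -[p %| a]orbb -irredp_dvdpM // -expr2 (dvdp_add_eq p_ab).
  by rewrite expr2 irredp_dvdpM // pb.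
(* Otherwise b is invertible mod p, and (a / b)^2 = -1 mod p. *)
move: npb; rewrite -irreducible_poly_coprime // => /Bezout_eq1_coprimepP [[u v] /= uv].
have : (v * a) ^+ 2 + 1 = v ^+ 2 * (a ^+ 2 + b ^+ 2) + u * p * (1 + v * b).
  by rewrite (_ : u * p = 1 - v * b); [ring | rewrite -uv; ring].
move=> va; have := p_nosqrt (v * a); rewrite va.
by rewrite (dvdp_add (dvdp_mull _ p_ab) (dvdp_mulr _ (dvdp_mulIr u p))).
Qed.

Lemma irredp_exp_dvdp_sqrD m a b : p ^+ (2 * m + 1) %| a ^+ 2 + b ^+ 2 -> p ^+ m.+1 %| a.
Proof.
elim: m a b => [|m IHm] a b; first by rewrite muln0 add0n expr1 => /irredp_dvdp_sqrD /andP [].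
move=> p_ab.
have /irredp_dvdp_sqrD/andP [/dvdpP [a1 a1E] /dvdpP [b1 b1E]] : p %| a ^+ 2 + b ^+ 2.
  by apply: dvdp_trans p_ab; rewrite -{1}(expr1 p) dvdp_exp2l //; lia.
have p2_neq0 : p ^+ 2 != 0 by rewrite expf_neq0 ?irredp_neq0.
rewrite a1E exprS mulrC dvdp_mul2r ?irredp_neq0 //; apply: (IHm _ b1).
rewrite -(dvdp_mul2r _ _ p2_neq0) -exprD (_ : (2 * m + 1 + 2 = 2 * m.+1 + 1)%N); last by lia.
by rewrite (_ : _ * p ^+ 2 = a ^+ 2 + b ^+ 2) // a1E b1E; ring.
Qed.
End IrreducibleNoSqrtN1.


Section QuotientCodes.
Variables (F : fieldType) (f : {poly F}).
Hypotheses (f_monic : f \is monic) (f_gt1 : (1 < size f)%N).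
Local Notation A := {poly %/ f}.

Lemma mk_monic_id : mk_monic f = f.
Proof. by rewrite /mk_monic f_gt1 f_monic. Qed.

Lemma modulus_neq0 : f != 0.
Proof. by rewrite -size_poly_gt0 ltnW. Qed.

Lemma in_qpolyE p : in_qpoly f p = p %% f :> {poly F}.
Proof. by rewrite /= mk_monic_id (Pdiv.IdomainMonic.modpE f_monic). Qed.

Lemma in_qpolyK (u : A) : in_qpoly f u = u.
Proof. exact/val_inj/in_qpoly_small/size_mk_monic. Qed.

Lemma in_qpoly_eq0 p : (in_qpoly f p == 0) = (f %| p).
Proof.
by rewrite -val_eqE /= mk_monic_id -(Pdiv.IdomainMonic.modpE f_monic); apply/eqP/modp_eq0P.
Qed.

Lemma mul_qpolyE (u v : A) : u * v = in_qpoly f ((u : {poly F}) * v).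
Proof. by rewrite -[u in LHS]in_qpolyK -[v in LHS]in_qpolyK -rmorphM. Qed.

Lemma dvdp_in_qpoly (d a b p q : {poly F}) : d %| f ->
  (d %| a * in_qpoly f p + b * in_qpoly f q) = (d %| a * p + b * q).
Proof.
move=> df; have modE r : r %% f = r - r %/ f * f by rewrite {2}(divp_eq r f) addrC addKr.
rewrite !in_qpolyE !modE.
rewrite (_ : _ + _ = a * p + b * q + (- (a * (p %/ f) + b * (q %/ f))) * f); last by ring.
by rewrite dvdp_addl // dvdp_mull.
Qed.

Lemma dvdp_in_qpolyMl (d a p : {poly F}) : d %| f ->
  (d %| a * in_qpoly f p) = (d %| a * p).
Proof. by move=> df; have := dvdp_in_qpoly a 0 p 0 df; rewrite !mul0r !addr0. Qed.

Lemma dvdp_in_qpoly1 (d p : {poly F}) : d %| f -> (d %| in_qpoly f p) = (d %| p).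
Proof. by move=> df; have := dvdp_in_qpolyMl 1 p df; rewrite !mul1r. Qed.

Lemma code_form_eq0 l (x c : 'rV[A]_l) :
  code_form x c = 0 <-> f %| \sum_i (x 0 i : {poly F}) * c 0 i.
Proof.
have -> : code_form x c = in_qpoly f (\sum_i (x 0 i : {poly F}) * c 0 i).
  by rewrite rmorph_sum; apply: eq_bigr => i _; rewrite mul_qpolyE.
by rewrite -in_qpoly_eq0; split=> /eqP.
Qed.

Definition divisor_code1 (g : {poly F}) : code A 1 :=
  fun c => g %| (c 0 0 : {poly F}).

Lemma divisor_code1_is_Acode g : g %| f -> is_Acode (divisor_code1 g).
Proof.
move=> gf; split=> [|u v gu gv|k u gu]; rewrite /divisor_code1 ?mxE.
- exact: dvdp0.
- exact: dvdp_add.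
- by rewrite mul_qpolyE dvdp_in_qpoly1 // dvdp_mull.
Qed.

Lemma divisor_code1_self_dual g : f = g ^+ 2 -> self_dual (divisor_code1 g).
Proof.
move=> fE; have gf : g %| f by rewrite fE expr2 dvdp_mulIl.
have g_neq0 : g != 0 by apply: contra_eq_neq fE => ->; rewrite expr0n modulus_neq0.
have fgg : f %= g * g by rewrite fE expr2 eqpxx.
move=> x; split=> [gx c gc | xperp].
  by apply/code_form_eq0; rewrite big_ord1 (eqp_dvdl _ fgg) dvdp_mul.
have := xperp (const_mx (in_qpoly f g)).
rewrite /divisor_code1 mxE dvdp_in_qpoly1 // dvdpp => /(_ isT) /code_form_eq0.
by rewrite big_ord1 mxE dvdp_in_qpolyMl // (eqp_dvdl _ fgg) dvdp_mul2r.
Qed.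

Lemma self_dual_code1_sqr : exists_self_dual_code A 1 -> exists g, f = g ^+ 2.
Proof.
move=> [C [[C0 CD CZ] Csd]]; pose I q := C (const_mx (in_qpoly f q)).
have Icomb a b p q : I p -> I q -> I (a * p + b * q).
  move=> Ip Iq; rewrite /I rmorphD !rmorphM.
  by rewrite (_ : const_mx _ = in_qpoly f a *: const_mx (in_qpoly f p) +
    in_qpoly f b *: const_mx (in_qpoly f q)); [apply: CD; apply: CZ |
    apply/rowP => j; rewrite !mxE].
have Ientry c : C c -> I (c 0 0).
  by rewrite /I in_qpolyK (_ : const_mx _ = c) //; apply/rowP => j; rewrite ord1 mxE.
have If : I f by rewrite /I (eqP (_ : in_qpoly f f == 0)) ?in_qpoly_eq0.
have [g g_monic [Ig gI]] := poly_ideal_monic_gen Icomb If modulus_neq0.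
have g_neq0 : g != 0 by apply: monic_neq0.
have ortho q : I q -> f %| g * q.
  move/(Csd _).1/(_ _ Ig)/code_form_eq0; rewrite big_ord1 !mxE.
  by rewrite dvdp_in_qpolyMl // mulrC dvdp_in_qpolyMl.
pose k := f %/ g; have fE : f = k * g by rewrite divpK ?gI.
have fkg : f %= k * g by rewrite fE eqpxx.
have Ik : I k.
  apply/(Csd _).2 => c /Ientry /gI /dvdpP [w cE]; apply/code_form_eq0.
  rewrite big_ord1 mxE mulrC dvdp_in_qpolyMl // cE (eqp_dvdl _ fkg).
  by rewrite -mulrA [g * k]mulrC dvdp_mulIr.
have k_monic : k \is monic by rewrite -(monicMr _ g_monic) -fE.
have k_g : k %| g by rewrite -(dvdp_mul2r _ _ g_neq0) -fE ortho.
have /eqP kg : k == g by rewrite -(eqp_monic k_monic g_monic) /eqp k_g gI.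
by exists g; rewrite fE kg expr2.
Qed.

Lemma exists_self_dual_code1P : exists_self_dual_code A 1 <-> exists g, f = g ^+ 2.
Proof.
split=> [|[g fE]]; first exact: self_dual_code1_sqr.
exists (divisor_code1 g); split; last exact: divisor_code1_self_dual.
by apply: divisor_code1_is_Acode; rewrite fE expr2 dvdp_mulIl.
Qed.

Local Notation i0 := (@ord0 1).
Local Notation i1 := (lift (@ord0 1) ord0).

Lemma code_form2_eq0 (x c : 'rV[A]_2) : code_form x c = 0 <->
  f %| (x 0 i0 : {poly F}) * c 0 i0 + (x 0 i1 : {poly F}) * c 0 i1.
Proof. by rewrite code_form_eq0 big_ord_recl big_ord1. Qed.

Lemma dvdp_divisor_form (g f' h x0 x1 c0 c1 : {poly F}) : f' %| h ^+ 2 + 1 ->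
  g %| x0 -> g * f' %| x1 - h * x0 -> g %| c0 -> g * f' %| c1 - h * c0 ->
  g ^+ 2 * f' %| x0 * c0 + x1 * c1.
Proof.
move=> f'h gx0 gx1 gc0 gc1; have gc1' : g %| c1.
  by rewrite -(subrK (h * c0) c1) dvdp_add ?dvdp_mull // (dvdp_trans (dvdp_mulIl g f')).
rewrite (_ : x0 * c0 + x1 * c1 =
  (h ^+ 2 + 1) * x0 * c0 + x0 * (c1 - h * c0) * h + (x1 - h * x0) * c1); last by ring.
rewrite (_ : g ^+ 2 * f' = f' * g * g); last by ring.
apply: dvdp_add; first apply: dvdp_add.
- by apply: dvdp_mul => //; apply: dvdp_mul.
- apply: dvdp_mulr; rewrite (_ : f' * g * g = g * (g * f')); last by ring.
  exact: dvdp_mul.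
- rewrite (_ : f' * g * g = g * f' * g); last by ring.
  exact: dvdp_mul.
Qed.

Definition divisor_code2 (g f' h : {poly F}) : code A 2 :=
  fun c => g %| (c 0 i0 : {poly F}) /\ g * f' %| (c 0 i1 : {poly F}) - h * c 0 i0.

Lemma divisor_code2_is_Acode g f' h : g * f' %| f -> is_Acode (divisor_code2 g f' h).
Proof.
move=> gf'f; have gf : g %| f := dvdp_trans (dvdp_mulIl g f') gf'f.
split=> [|u v [gu0 gu1] [gv0 gv1]|k u [gu0 gu1]]; rewrite /divisor_code2 !mxE.
- by rewrite mulr0 subr0 !dvdp0.
- rewrite !poly_of_qpolyD mulrDr opprD addrACA.
  by split; apply: dvdp_add.
- rewrite !mul_qpolyE dvdp_in_qpoly1 ?dvdp_mull //; split=> //.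
  rewrite -[X in _ %| X - _]mul1r -mulNr dvdp_in_qpoly // mul1r mulNr.
  by rewrite mulrCA -mulrBr dvdp_mull.
Qed.

Lemma divisor_code2_self_dual g f' h : f = g ^+ 2 * f' -> f' %| h ^+ 2 + 1 ->
  self_dual (divisor_code2 g f' h).
Proof.
move=> fE f'h; have ff : f %= g ^+ 2 * f' by rewrite fE eqpxx.
have gf'f : g * f' %| f by rewrite (eqp_dvdr _ ff) expr2 -mulrA dvdp_mulIr.
have gf : g %| f := dvdp_trans (dvdp_mulIl g f') gf'f.
have g_neq0 : g != 0 by apply: contra_eq_neq fE => ->; rewrite expr0n mul0r modulus_neq0.
have f'_neq0 : f' != 0 by apply: contra_eq_neq fE => ->; rewrite mulr0 modulus_neq0.
move=> x; split=> [[gx0 gx1] c [gc0 gc1] | xperp].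
  by apply/code_form2_eq0; rewrite (eqp_dvdl _ ff) (dvdp_divisor_form f'h).
have /code_form2_eq0 : code_form x (\row_j [:: in_qpoly f g; in_qpoly f (g * h)]`_j) = 0.
  apply: xperp; rewrite /divisor_code2 !mxE /= dvdp_in_qpoly1 // dvdpp; split=> //.
  rewrite -[X in _ %| X - _]mul1r -mulNr dvdp_in_qpoly // mul1r mulNr.
  by rewrite [h * g]mulrC subrr dvdp0.
have /code_form2_eq0 : code_form x (\row_j [:: 0; in_qpoly f (g * f')]`_j) = 0.
  by apply: xperp; rewrite /divisor_code2 !mxE /= mulr0 subr0 dvdp0 dvdp_in_qpoly1.
rewrite !mxE /= mulr0 add0r !dvdp_in_qpolyMl // -[X in X * _ + _]mulr1.
rewrite dvdp_in_qpoly // mulr1 !(eqp_dvdl _ ff) /divisor_code2.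
move: (x 0 i0 : {poly F}) (x 0 i1 : {poly F}) => x0 x1.
rewrite (_ : g ^+ 2 * f' = g * f' * g); last by ring.
rewrite [x1 * _]mulrC dvdp_mul2l ?mulf_neq0 // => gx1.
rewrite (_ : x0 * g + x1 * (g * h) = (x0 + h * x1) * g); last by ring.
rewrite dvdp_mul2r // => gf'x.
have gx0 : g %| x0.
  rewrite -(addrK (h * x1) x0) dvdp_sub ?dvdp_mull //.
  exact: dvdp_trans (dvdp_mulIl g f') gf'x.
split=> //; rewrite (_ : x1 - h * x0 = x1 * (h ^+ 2 + 1) - h * (x0 + h * x1)); last by ring.
by apply: dvdp_sub; [apply: dvdp_mul | apply: dvdp_mull].
Qed.

Lemma exists_self_dual_code2 g f' h : f = g ^+ 2 * f' -> f' %| h ^+ 2 + 1 ->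
  exists_self_dual_code A 2.
Proof.
move=> fE f'h; exists (divisor_code2 g f' h); split; last exact: divisor_code2_self_dual.
by apply: divisor_code2_is_Acode; rewrite fE expr2 -mulrA dvdp_mulIr.
Qed.

Lemma no_self_dual_code2 (p r : {poly F}) (e : nat) : irreducible_poly p ->
  (forall h, ~~ (p %| h ^+ 2 + 1)) -> f = p ^+ e * r -> odd e -> coprimep p r ->
  ~ exists_self_dual_code A 2.
Proof.
move=> p_irr p_nosqrt fE odd_e cop_pr [C [_ Csd]].
set k := e./2; have eE : e = (2 * k + 1)%N.
  by rewrite -[e in LHS]odd_double_half odd_e -mul2n addnC.
have ff : f %= p ^+ (2 * k + 1) * r by rewrite fE eE eqpxx.
have pf : p ^+ (2 * k + 1) %| f by rewrite (eqp_dvdr _ ff) dvdp_mulIl.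
have Cp c : C c -> p ^+ k.+1 %| c 0 i0.
  move=> Cc; have /code_form2_eq0 := (Csd c).1 Cc c Cc; rewrite -!expr2 => fc.
  exact: (irredp_exp_dvdp_sqrD p_irr p_nosqrt (dvdp_trans pf fc)).
pose z : 'rV[A]_2 := \row_j [:: in_qpoly f (r * p ^+ k); 0]`_j.
have Cz : C z.
  apply/(Csd z).2 => c /Cp /dvdpP [w cE]; apply/code_form2_eq0.
  rewrite !mxE /= mul0r addr0 mulrC dvdp_in_qpolyMl // cE (eqp_dvdl _ ff).
  rewrite (_ : w * _ * _ = w * (p ^+ (2 * k + 1) * r)) ?dvdp_mulIr //.
  by rewrite exprS exprD expr1 mulnC exprM; ring.
have := Cp z Cz; rewrite !mxE /= dvdp_in_qpoly1; last first.
  by apply: dvdp_trans pf; apply: dvdp_exp2l; lia.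
rewrite exprS dvdp_mul2r ?expf_neq0 ?irredp_neq0 //.
by apply/negP; rewrite -irreducible_poly_coprime.
Qed.

End QuotientCodes.


Lemma irredp_dvdp_sqr_add1P (F : finFieldType) (p : {poly F}) :
  p \is monic -> irreducible_poly p ->
  (exists h, p %| h ^+ 2 + 1) <-> (#|F| ^ (size p).-1 %% 4 != 3)%N.
Proof.
move=> p_monic p_irr; have p_gt1 : (1 < size p)%N by case: p_irr.
pose K := {poly %/ p with (p_irr, p_monic)}.
rewrite -(card_qfpoly (p_irr, p_monic)) -/K -sqrf_eqN1P.
split=> [[h ph] | [x x2]].
  exists (in_qpoly p h : K); apply/eqP; rewrite -addr_eq0.
  by move: ph; rewrite -(in_qpoly_eq0 p_monic p_gt1) rmorphD rmorphXn rmorph1.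
exists (x : {poly F}); rewrite -(in_qpoly_eq0 p_monic p_gt1) rmorphD rmorphXn rmorph1.
by rewrite /= in_qpolyK addr_eq0 x2.
Qed.

Lemma expn_mod4 q d : odd q -> q ^ d = q ^ odd d %[mod 4].
Proof.
move=> odd_q; have q2 : q ^ 2 = 1 %[mod 4].
  rewrite -modnXm; have : (q %% 4 = 1 \/ q %% 4 = 3)%N by lia.
  by case=> ->.
have -> : (q ^ d = q ^ odd d * (q ^ 2) ^ d./2)%N.
  by rewrite -expnM -expnD mul2n odd_double_half.
by rewrite -modnMmr -modnXm q2 modnXm exp1n muln1.
Qed.

Section Factorization.
Variables (F : finFieldType) (f : {poly F}) (s : seq ({poly F} * nat)).
Hypotheses (s_irr : forall pe, pe \in s ->
              [/\ pe.1 \is monic, irreducible_poly pe.1 & (0 < pe.2)%N])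
           (s_uniq : uniq (map fst s)) (f_prod : f = \prod_(pe <- s) pe.1 ^+ pe.2).

Lemma factor_coprime pe : pe \in s ->
  exists2 r, f = pe.1 ^+ pe.2 * r & coprimep pe.1 r.
Proof.
move=> pe_s; have [pe_monic pe_irr _] := s_irr pe_s.
exists (\prod_(x <- rem pe s) x.1 ^+ x.2).
  by rewrite f_prod (perm_big _ (perm_to_rem pe_s)) big_cons.
have := s_uniq; rewrite (perm_uniq (perm_map fst (perm_to_rem pe_s))) /= => /andP [pe_rem _].
rewrite big_seq; apply: coprimep_prod => x x_rem; apply: coprimep_expr.
have [x_monic x_irr _] := s_irr (mem_rem x_rem).
apply: coprimep_monic_irredp => //; apply: contraNneq pe_rem => ->.
exact: map_f.
Qed.

Lemma self_dual_code2_even_factors :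
  f \is monic -> (1 < size f)%N -> (#|F| %% 4 = 3)%N ->
  exists_self_dual_code {poly %/ f} 2 ->
  forall pe, pe \in s -> ~~ odd ((size pe.1).-1 * pe.2).
Proof.
move=> f_monic f_gt1 F3 sd2 pe pe_s; apply/negP; rewrite oddM => /andP [odd_d odd_e].
have [pe_monic pe_irr _] := s_irr pe_s; have [r fE cop] := factor_coprime pe_s.
apply: (no_self_dual_code2 f_monic f_gt1 pe_irr _ fE odd_e cop sd2) => h.
apply/negP => ph; have /(irredp_dvdp_sqr_add1P pe_monic pe_irr) : exists h, pe.1 %| h ^+ 2 + 1.
  by exists h.
by rewrite expn_mod4 ?odd_d ?expn1 ?F3 //; move: F3; lia.
Qed.

Lemma even_factors_sqr_decomp : (#|F| %% 4 = 3)%N ->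
  (forall pe, pe \in s -> ~~ odd ((size pe.1).-1 * pe.2)) ->
  exists g f', f = g ^+ 2 * f' /\ exists h, f' %| h ^+ 2 + 1.
Proof.
move=> F3 even_s; exists (\prod_(x <- s) x.1 ^+ x.2./2).
exists (\prod_(p <- [seq x.1 | x <- s & odd x.2]) p); split.
  rewrite f_prod -prodrXl big_map big_filter (big_mkcond (fun x => odd x.2)) -big_split /=.
  apply: eq_bigr => x _; rewrite -exprM muln2 -{1}(odd_double_half x.2) exprD.
  by case: (odd x.2); rewrite ?expr1 ?expr0 ?mulr1 ?mul1r // mulrC.
apply: dvdp_sqr_add1_prod.
  set r := [seq x.1 | x <- s & odd x.2].
  have r_uniq : uniq r by apply: subseq_uniq s_uniq; apply/map_subseq/filter_subseq.
  move: r_uniq; rewrite uniq_pairwise; apply: sub_in_pairwise (allss r) => p q /mapP [x].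
  rewrite mem_filter => /andP [_ x_s] -> /mapP [y]; rewrite mem_filter => /andP [_ y_s] ->.
  have [x_monic x_irr _] := s_irr x_s; have [y_monic y_irr _] := s_irr y_s.
  exact: coprimep_monic_irredp.
move=> p /mapP [x]; rewrite mem_filter => /andP [odd_e x_s] ->.
have [x_monic x_irr _] := s_irr x_s; apply/(irredp_dvdp_sqr_add1P x_monic x_irr).
have := even_s x x_s; rewrite oddM odd_e andbT => /negbTE even_d.
by rewrite expn_mod4 ?even_d //; move: F3; lia.
Qed.

Lemma self_dual_code2_card_mod4 : f \is monic -> (1 < size f)%N ->
  exists_self_dual_code {poly %/ f} 2 ->
  [\/ (#|F| %% 4 = 3)%N /\ (forall pe, pe \in s -> ~~ odd ((size pe.1).-1 * pe.2)),
      ~~ odd #|F| | (#|F| %% 4 = 1)%N].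
Proof.
move=> f_monic f_gt1 sd2; have [F3 | F_n3] := eqVneq (#|F| %% 4)%N 3%N.
  by apply: Or31; split=> //; apply: self_dual_code2_even_factors.
by have [oddF | evenF] := boolP (odd #|F|); [apply: Or33 | apply: Or32]; lia.
Qed.

Lemma card_mod4_sqr_decomp :
  [\/ (#|F| %% 4 = 3)%N /\ (forall pe, pe \in s -> ~~ odd ((size pe.1).-1 * pe.2)),
      ~~ odd #|F| | (#|F| %% 4 = 1)%N] ->
  exists g f', f = g ^+ 2 * f' /\ exists h, f' %| h ^+ 2 + 1.
Proof.
case=> [[F3 even_s] | evenF | F1]; first exact: even_factors_sqr_decomp.
all: have [a a2] : exists a : F, a ^+ 2 = -1 by apply/sqrf_eqN1P; rewrite ?F1 //; lia.
all: exists 1, f; split; first by rewrite expr1n mul1r.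
all: by exists a%:P; rewrite -polyC_exp a2 polyCN addNr dvdp0.
Qed.
End Factorization.

Theorem mainTheorem11 (F : finFieldType) (f : {poly F})
  (f_monic : f \is monic) (f_deg : (1 < size f)%N) :
  (* (a) *)
  (forall l : nat, (0 < l)%N -> (4 %| l)%N ->
     exists_self_dual_code {poly %/ f} l)
  /\
  (* (b) *)
  ((forall l : nat, (1 <= l)%N -> exists_self_dual_code {poly %/ f} l)
     <-> exists g : {poly F}, f = g ^+ 2)
  /\
  (* (c) *)
  (forall s : seq ({poly F} * nat),
     (forall pe, pe \in s ->
        [/\ pe.1 \is monic, irreducible_poly pe.1 & (0 < pe.2)%N]) ->
     uniq (map fst s) ->
     f = \prod_(pe <- s) pe.1 ^+ pe.2 ->
     let c1 := forall l : nat, (0 < l)%N -> ~~ odd l ->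
                 exists_self_dual_code {poly %/ f} l in
     let c2 := exists g f' : {poly F}, f = g ^+ 2 * f' /\
                 exists h : {poly F}, f' %| h ^+ 2 + 1 in
     let c3 := [\/ (#|F| %% 4 = 3)%N /\
                     (forall pe, pe \in s -> ~~ odd ((size pe.1).-1 * pe.2)),
                   ~~ odd #|F|
                 | (#|F| %% 4 = 1)%N] in
     (c1 <-> c2) /\ (c2 <-> c3)).
Proof.
have sd4 := exists_self_dual_code4_finField (qpolyC f).
split; first by move=> l; apply: exists_self_dual_code_dvdn sd4.
split.
  rewrite -(exists_self_dual_code1P f_monic f_deg); split=> [/(_ 1%N isT) // | sd1 l l_gt0].
  exact: exists_self_dual_code_dvdn sd1 l_gt0 (dvd1n l).
move=> s s_irr s_uniq f_prod c1 c2 c3.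
have c21 : c2 -> c1.
  move=> [g [f' [fE [h f'h]]]] l l_gt0 even_l.
  apply: exists_self_dual_code_dvdn (exists_self_dual_code2 f_monic f_deg fE f'h) l_gt0 _.
  by rewrite dvdn2.
have c13 : c1 -> c3.
  by move=> /(_ 2%N isT isT); apply: (self_dual_code2_card_mod4 s_irr s_uniq f_prod).
have c32 : c3 -> c2 := card_mod4_sqr_decomp s_irr s_uniq f_prod.
split; split.
- by move=> /c13/c32.
- exact: c21.
- by move=> /c21/c13.
- exact: c32.
Qed.
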